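(* Let $s\ge1$ be an integer, $\Sigma_*=\{-s,\dots,-1,1,\dots,s\}$, and for $n\ge0$ let $T_n\subseteq\Sigma_*^n$ be the set of strings $t_1\cdots t_n$ such that there is no index $j$ with $t_j=m\in\{1,\dots,s\}$ and $t_{j+1}=-m$ (with $T_0$ consisting of the empty string). Then $|T_0|=1$, $|T_1|=2s$, and $|T_{n+2}|=2s|T_{n+1}|-s|T_n|$ for all $n\ge0$. Moreover, for $s\ge2$, $$|T_n|=\frac{s^n}{2\sqrt{1-1/s}}\left\{\left(1+\sqrt{1-1/s}\right)^{n+1}-\left(1-\sqrt{1-1/s}\right)^{n+1}\right\},$$ and asymptotically $|T_n|\approx\frac{1+\sqrt{1-1/s}}{2\sqrt{1-1/s}}\left[s\left(1+\sqrt{1-1/s}\right)\right]^n$, in the sense that the ratio of the two sides tends to $1$ as $n\to\infty$. *)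

From HB Require Import structures.
From mathcomp Require Import all_boot all_order all_algebra.
From mathcomp Require Import all_classical all_reals all_analysis.
Set Implicit Arguments. Unset Strict Implicit. Unset Printing Implicit Defensive.
Import Order.TTheory GRing.Theory Num.Theory.
Local Open Scope ring_scope.

(* The alphabet Sigma_* = {-s,...,-1,1,...,s}, encoded as the finite type
   'I_s * bool : (i, true) stands for the letter i+1, (i, false) for -(i+1). *)
Definition Sig (s : nat) : finType := ('I_s * bool)%type.

Definition letter (s : nat) (a : Sig s) : int :=
  if a.2 then (a.1.+1)%:Z else - (a.1.+1)%:Z.

Definition good (w : seq int) : bool :=
  ~~ has (fun j => (0 < nth 0 w j) && (nth 0 w j.+1 == - nth 0 w j))
         (iota 0 (size w).-1).

Definition T (s n : nat) : {set n.-tuple (Sig s)} :=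
  [set t : n.-tuple (Sig s) | good (map (@letter s) t)].

Definition Tcard (s n : nat) : nat := #|T s n|.

From HB Require Import structures.
From mathcomp Require Import all_boot all_order all_algebra.
From mathcomp Require Import all_classical all_reals all_analysis.
From mathcomp Require Import zify ring lra.

Set Implicit Arguments.
Unset Strict Implicit.
Unset Printing Implicit Defensive.
Import Order.TTheory GRing.Theory Num.Theory.
Local Open Scope ring_scope.

(* Prepending a letter x to a good word w yields a bad word exactly when
   x = m > 0 and w starts with -m.  So among the 2s |T_n| words x :: w, one is
   lost for each good w starting with a negative letter:
   |T_(n+1)| = 2s |T_n| - N_n, where N_n ([Tneg n]) counts those w.  A good word
   starting with a negative letter is such a letter followed by any good word,
   so N_(n+1) = s |T_n|, and eliminating N gives the recurrence.  Its
   characteristic roots are s (1 +- r) with r = sqrt (1 - 1/s), whence the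
   closed form; the ratio in the asymptotic claim is
   1 - ((1 - r) / (1 + r))^(n+1). *)

Lemma big_tuple_cons (R : Type) (idx : R) (op : Monoid.com_law idx)
    (T : finType) n (F : n.+1.-tuple T -> R) :
  \big[op/idx]_(t : n.+1.-tuple T) F t
  = \big[op/idx]_(x : T) \big[op/idx]_(w : n.-tuple T) F [tuple of x :: w].
Proof.
rewrite pair_bigA /= (reindex (fun p : T * n.-tuple T => [tuple of p.1 :: p.2])) //.
exists (fun t => (thead t, [tuple of behead t])).
  by move=> [x w] _ /=; rewrite theadE; congr pair; apply: val_inj.
by move=> t _ /=; rewrite [RHS]tuple_eta.
Qed.

Lemma good_cons (x : int) (w : seq int) :
  good (x :: w) = good w && ~~ ((0 < x) && (nth 0 w 0 == - x)).
Proof.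
case: w => [|y w] /=.
  rewrite /good /= eq_sym oppr_eq0.
  by case: (ltrgt0P x) => // ->; rewrite ltxx.
rewrite /good /=.
have -> : iota 1 (size w) = map S (iota 0 (size w)) by rewrite -(iotaDl 1).
by rewrite has_map negb_or andbC.
Qed.

Section GoodWords.

Variable s : nat.

Local Notation word t := (map (@letter s) (tval t)).

Lemma Tcard_sum n : Tcard s n = (\sum_(t : n.-tuple (Sig s)) good (word t))%N.
Proof.
rewrite /Tcard /T -sum1_card big_mkcond /=.
by apply: eq_bigr => t _; rewrite inE; case: good.
Qed.

Definition Tneg n : nat :=
  \sum_(t : n.-tuple (Sig s)) (good (word t) && (nth 0%R (word t) 0 < 0)%R).

Lemma Tneg0 : Tneg 0 = 0%N.
Proof. by rewrite /Tneg big1 // => t _; rewrite tuple0. Qed.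

Lemma letter_gt0 (a : Sig s) : (0 < letter a) = a.2.
Proof. by case: a => i [] /=; rewrite /letter /=; lia. Qed.

Lemma letter_lt0 (a : Sig s) : (letter a < 0) = ~~ a.2.
Proof. by case: a => i [] /=; rewrite /letter /=; lia. Qed.

Lemma sum_Sig (F : Sig s -> nat) :
  (\sum_(x : Sig s) F x = \sum_(i < s) (F (i, true) + F (i, false)))%N.
Proof.
rewrite (eq_bigr (fun p : Sig s => F (p.1, p.2))); last by case.
rewrite -(pair_bigA _ (fun i b => F (i, b))) /=.
by under eq_bigr => i _ do rewrite big_bool.
Qed.

Lemma sum_clashing_letters (w : seq (Sig s)) :
  (\sum_(x : Sig s)
     ((0 < letter x) && (nth 0 (map (@letter s) w) 0 == - letter x))%R)%N
  = ((nth 0 (map (@letter s) w) 0 < 0)%R : nat).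
Proof.
case: w => [|y w] /=.
  rewrite big1 // => x _; rewrite eq_sym oppr_eq0.
  by case: (ltrgt0P (letter x)).
rewrite sum_Sig letter_lt0.
under eq_bigr => i _ do rewrite !letter_gt0 /= addn0.
case: y => j [] /=.
  by rewrite big1 // => i _; rewrite /letter /=; apply/eqP; lia.
rewrite (bigD1 j) //= big1 ?addn0; first by rewrite /letter /= eqxx.
move=> i ij; rewrite /letter /=.
by move: ij; rewrite eqr_opp eqz_nat eqSS eq_sym -val_eqE => /negbTE ->.
Qed.

Lemma TcardS_add_Tneg n : (Tcard s n.+1 + Tneg n = 2 * s * Tcard s n)%N.
Proof.
rewrite !Tcard_sum /Tneg.
under [X in (_ + X)%N]eq_bigr => w _ do
  rewrite -mulnb -sum_clashing_letters big_distrr /=.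
have -> : (2 * s * \sum_(w : n.-tuple (Sig s)) good (word w)
          = \sum_(x : Sig s) \sum_(w : n.-tuple (Sig s)) good (word w))%N.
  by rewrite sum_nat_const (card_prod 'I_s bool) card_ord card_bool (mulnC s).
rewrite exchange_big big_tuple_cons -big_split /=; apply: eq_bigr => x _.
rewrite -big_split /=; apply: eq_bigr => w _.
by rewrite good_cons mulnb; case: good => //=; case: (_ && _).
Qed.

Lemma TnegS n : Tneg n.+1 = (s * Tcard s n)%N.
Proof.
rewrite Tcard_sum /Tneg big_tuple_cons.
under eq_bigr => x _ do
  under eq_bigr => w _ do rewrite /= good_cons letter_gt0 letter_lt0.
rewrite sum_Sig -[X in (X * _)%N]card_ord -sum_nat_const.
apply: eq_bigr => i _ /=.
rewrite big1 ?add0n => [|w _]; last by rewrite andbF.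
by apply: eq_bigr => w _; rewrite !andbT.
Qed.

End GoodWords.

Lemma Tcard0 s : Tcard s 0 = 1%N.
Proof.
rewrite Tcard_sum (eq_bigr (fun _ => 1%N)) => [|t _]; last by rewrite tuple0.
by rewrite sum_nat_const card_tuple.
Qed.

Lemma Tcard1 s : Tcard s 1 = (2 * s)%N.
Proof. by have := TcardS_add_Tneg s 0; rewrite Tneg0 Tcard0 addn0 muln1. Qed.

Lemma TcardSS s n : (Tcard s n.+2 + s * Tcard s n = 2 * s * Tcard s n.+1)%N.
Proof. by rewrite -TnegS TcardS_add_Tneg. Qed.

Lemma recurrence2_closed_form (R : fieldType) (a b : R) (u : nat -> R) :
    a != b -> u 0%N = 1 -> u 1%N = a + b ->
    (forall n, u n.+2 = (a + b) * u n.+1 - a * b * u n) ->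
  forall n, u n = (a ^+ n.+1 - b ^+ n.+1) / (a - b).
Proof.
move=> ab u0 u1 uSS.
have ab0 : a - b != 0 by rewrite subr_eq0.
suff closed n : u n = (a ^+ n.+1 - b ^+ n.+1) / (a - b)
             /\ u n.+1 = (a ^+ n.+2 - b ^+ n.+2) / (a - b).
  by move=> n; case: (closed n).
elim: n => [|n [IHn IHSn]].
  by rewrite u0 u1 expr1 expr2 expr2; split; field.
by split=> //; rewrite uSS IHn IHSn !exprS; field.
Qed.

Local Open Scope classical_set_scope.

Lemma closed_form_ratio_cvg (R : realType) (a b : R) : `|b| < `|a| ->
  (fun n => (a ^+ n.+1 - b ^+ n.+1) / (a - b) / (a / (a - b) * a ^+ n))
    @ \oo --> (1 : R^o).
Proof.
move=> ba.
have a0 : a != 0 by rewrite -normr_gt0 (le_lt_trans _ ba).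
have ab0 : a - b != 0.
  by rewrite subr_eq0; apply: contraTneq ba => ->; rewrite ltxx.
have q1 : `|b / a| < 1 by rewrite normrM normfV ltr_pdivrMr ?normr_gt0 ?mul1r.
have -> : (fun n => (a ^+ n.+1 - b ^+ n.+1) / (a - b) / (a / (a - b) * a ^+ n))
          = (fun n => 1 - geometric (b / a) (b / a) n).
  apply: funext => n /=; rewrite -exprS expr_div_n.
  have an0 : a ^+ n != 0 by rewrite expf_neq0.
  by rewrite exprS; field; rewrite a0 ab0 an0.
rewrite -[X in _ --> X]subr0; apply: cvgB; first exact: cvg_cst.
exact: cvg_geometric.
Qed.

Section ClosedForm.

Variables (R : realType) (s : nat).
Hypothesis s_ge2 : (2 <= s)%N.

Local Notation S := (s%:R : R).
Local Notation r := (Num.sqrt (1 - S^-1)).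

Let S_gt0 : 0 < S. Proof. by rewrite ltr0n (leq_trans _ s_ge2). Qed.

Lemma sqrt_disc_sqr : r ^+ 2 = 1 - S^-1.
Proof.
rewrite sqr_sqrtr // subr_ge0 invf_le1 //.
by rewrite (ler_nat R 1 s) (leq_trans _ s_ge2).
Qed.

Lemma sqrt_disc_gt0 : 0 < r.
Proof. by rewrite sqrtr_gt0 subr_gt0 invf_lt1 // (ltr_nat R 1 s). Qed.

Lemma sqrt_disc_lt1 : r < 1.
Proof.
have := sqrt_disc_sqr; have := sqrt_disc_gt0.
have : 0 < S^-1 by rewrite invr_gt0.
nra.
Qed.

Lemma norm_roots_lt : `|S * (1 - r)| < `|S * (1 + r)|.
Proof.
have r0 := sqrt_disc_gt0; have r1 := sqrt_disc_lt1.
rewrite !ger0_norm ?mulr_ge0 ?subr_ge0 ?addr_ge0 ?ltW //.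
by rewrite ltr_pM2l // ltrD2l gtrN.
Qed.

Lemma Tcard_closed_form n :
  (Tcard s n)%:R = ((S * (1 + r)) ^+ n.+1 - (S * (1 - r)) ^+ n.+1)
                   / (S * (1 + r) - S * (1 - r)).
Proof.
have S0 : S != 0 by rewrite lt0r_neq0.
have prod_roots : S * (1 + r) * (S * (1 - r)) = S.
  have -> : S * (1 + r) * (S * (1 - r)) = S ^+ 2 * (1 - r ^+ 2) by ring.
  by rewrite sqrt_disc_sqr; field.
have sum_roots : S * (1 + r) + S * (1 - r) = 2 * S by ring.
apply: (recurrence2_closed_form (u := fun n => (Tcard s n)%:R)).
- rewrite -subr_eq0; have -> : S * (1 + r) - S * (1 - r) = 2 * S * r by ring.
  by rewrite !mulf_neq0 // lt0r_neq0 ?sqrt_disc_gt0.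
- by rewrite Tcard0.
- by rewrite sum_roots Tcard1 natrM.
move=> m; have := congr1 (fun k : nat => k%:R : R) (TcardSS s m).
by rewrite /= !natrD !natrM sum_roots prod_roots => E; rewrite -E; ring.
Qed.

End ClosedForm.

Theorem lemma7 (R : realType) (s : nat) (hs : (1 <= s)%N) :
  [/\ Tcard s 0 = 1%N, Tcard s 1 = (2 * s)%N,
      (forall n : nat,
          (Tcard s n.+2)%:Z = (2 * s)%:Z * (Tcard s n.+1)%:Z - s%:Z * (Tcard s n)%:Z)
    & ((2 <= s)%N ->
       let r : R := Num.sqrt (1 - s%:R^-1) in
       (forall n : nat,
          (Tcard s n)%:R = (s%:R ^+ n / (2 * r)) * ((1 + r) ^+ n.+1 - (1 - r) ^+ n.+1))
       /\
       ((fun n : nat => (Tcard s n)%:R / ((1 + r) / (2 * r) * (s%:R * (1 + r)) ^+ n))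
          @ \oo --> (1 : R^o)))].
Proof.
split; [exact: Tcard0 | exact: Tcard1 | by move=> n; have := TcardSS s n; lia |].
move=> s_ge2 r.
have S0 : s%:R != 0 :> R by rewrite pnatr_eq0 -lt0n.
have r0 : r != 0 := lt0r_neq0 (sqrt_disc_gt0 R s_ge2).
have diff_roots : s%:R * (1 + r) - s%:R * (1 - r) = 2 * s%:R * r by ring.
split=> [n|].
  rewrite Tcard_closed_form // -/r diff_roots !exprMn exprS.
  by field; apply/andP.
have -> : (1 + r) / (2 * r)
          = s%:R * (1 + r) / (s%:R * (1 + r) - s%:R * (1 - r)).
  by rewrite diff_roots; field; apply/andP.
under eq_fun => n do rewrite Tcard_closed_form // -/r.
exact/closed_form_ratio_cvg/norm_roots_lt.
Qed.
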